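(* Let $f=\sum_{i=0}^{d-1}c_it^i+t^d\in\mathcal{L}[t]$ be monic of degree $d\ge1$ with $c_0\ne0$, whose Newton polygon consists of exactly one edge, of slope $s$, and put $r=ds\in\mathbb{Z}$. Let $M$ be a left $\mathcal{L}[t]$-module isomorphic to $\mathcal{L}[t]/\mathcal{L}[t]f$. (1) There is an $\mathcal{O}$-lattice $\Lambda$ in $M$ with $\sigma^rt^d\Lambda=\Lambda$. If $s>0$, $\Lambda$ can moreover be chosen with $t^{-1}\Lambda\subseteq\Lambda$. (2) If $u,v\in\mathbb{Z}$, $u\ne0$, and $\Lambda'$ is an $\mathcal{O}$-lattice in $M$ with $\sigma^vt^u\Lambda'=\Lambda'$, then $v/u=s$.
   Context: $(\mathcal{L},v)$ is a complete discretely valued skew field (division ring with a discrete valuation $v:\mathcal{L}\to\mathbb{Z}\cup\{\infty\}$, complete), with valuation ring $\mathcal{O}=\{v\ge0\}$ and a fixed uniformizer $\sigma$ ($v(\sigma)=1$). $\mathcal{L}[t]$ is the polynomial ring in a central indeterminate $t$; $t$ acts invertibly on $M$ here since $c_0\neq 0$. The Newton polygon of $f=\sum a_it^i$ is the lower convex hull of the points $(i,v(a_i))$ with $a_i\ne0$. An $\mathcal{O}$-lattice in a finite-dimensional left $\mathcal{L}$-vector space $M$ is a finitely generated $\mathcal{O}$-submodule containing an $\mathcal{L}$-basis of $M$. *)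

From HB Require Import structures.
From mathcomp Require Import all_boot all_order all_algebra.
Set Implicit Arguments. Unset Strict Implicit. Unset Printing Implicit Defensive.
Import Order.TTheory GRing.Theory Num.Theory.
Local Open Scope ring_scope.

(* A valuation v : L -> int; the value v 0 = +oo is encoded by [vge]:
   vge v x n  <=>  v(x) >= n  (always true for x = 0). *)
Definition vge (L : unitRingType) (v : L -> int) (x : L) (n : int) : bool :=
  (x == 0) || (n <= v x).

Definition is_skew_field (L : unitRingType) : Prop :=
  forall x : L, x != 0 -> x \is a GRing.unit.

Definition is_discrete_valuation (L : unitRingType) (v : L -> int) : Prop :=
  (forall x y : L, x != 0 -> y != 0 -> v (x * y) = v x + v y) /\
  (forall (x y : L) (n : int), vge v x n -> vge v y n -> vge v (x + y) n).

Definition v_cauchy (L : unitRingType) (v : L -> int) (a : nat -> L) : Prop :=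
  forall N : int, exists K : nat, forall m n : nat,
    (K <= m)%N -> (K <= n)%N -> vge v (a m - a n) N.
Definition v_converges (L : unitRingType) (v : L -> int) (a : nat -> L) (l : L) :
  Prop :=
  forall N : int, exists K : nat, forall n : nat, (K <= n)%N -> vge v (a n - l) N.
Definition v_complete (L : unitRingType) (v : L -> int) : Prop :=
  forall a : nat -> L, v_cauchy v a -> exists l, v_converges v a l.

(* Action of p in L[t] on M, where t acts through the L-linear map T. *)
Definition poly_act (L : unitRingType) (M : lmodType L) (T : M -> M)
  (p : {poly L}) (m : M) : M :=
  \sum_(i < size p) p`_i *: iter i T m.

(* The left L[t]-module (M, T) is isomorphic to L[t]/L[t]f:
   there is m0 with p |-> p.m0 surjective with kernel the left ideal L[t]f. *)
Definition iso_cyclic (L : unitRingType) (M : lmodType L) (T : M -> M)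
  (f : {poly L}) : Prop :=
  exists m0 : M,
    (forall x : M, exists p : {poly L}, x = poly_act T p m0) /\
    (forall p : {poly L}, poly_act T p m0 = 0 <-> exists q : {poly L}, p = q * f).

(* O-span of finitely many generators, O = {v >= 0}. *)
Definition in_Ospan (L : unitRingType) (v : L -> int) (M : lmodType L)
  (g : seq M) (x : M) : Prop :=
  exists a : 'I_(size g) -> L, (forall i, vge v (a i) 0) /\
    x = \sum_(i < size g) a i *: g`_i.

Definition is_L_basis (L : unitRingType) (M : lmodType L) (n : nat)
  (b : 'I_n -> M) : Prop :=
  (forall a : 'I_n -> L, \sum_(i < n) a i *: b i = 0 -> forall i, a i = 0) /\
  (forall x : M, exists a : 'I_n -> L, x = \sum_(i < n) a i *: b i).

Definition is_O_lattice (L : unitRingType) (v : L -> int) (M : lmodType L)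
  (Lam : M -> Prop) : Prop :=
  (exists g : seq M, forall x, Lam x <-> in_Ospan v g x) /\
  (exists (n : nat) (b : 'I_n -> M), (forall i, Lam (b i)) /\ is_L_basis b).

(* tpow T u x y  <=>  y = t^u x  (u may be negative; T is invertible). *)
Definition tpow (L : unitRingType) (M : lmodType L) (T : M -> M) (u : int)
  (x y : M) : Prop :=
  if (0 <= u) then y = iter `|u|%N T x else iter `|u|%N T y = x.

Definition img_st (L : unitRingType) (M : lmodType L) (T : M -> M) (sigma : L)
  (v u : int) (Lam : M -> Prop) : M -> Prop :=
  fun z => exists x y : M, Lam x /\ tpow T u x y /\ z = sigma ^ v *: y.

Definition set_eq (M : Type) (A B : M -> Prop) : Prop := forall z, A z <-> B z.
Definition set_sub (M : Type) (A B : M -> Prop) : Prop := forall z, A z -> B z.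

From HB Require Import structures.
From mathcomp Require Import all_boot all_order all_algebra.
From mathcomp Require Import zify ring lra.
Import Order.TTheory GRing.Theory Num.Theory.
Set Implicit Arguments. Unset Strict Implicit. Unset Printing Implicit Defensive.
Local Open Scope ring_scope.

(* Let m0 generate M and put e(k) = floor (k r / d).  Since the Newton polygon is a single
   edge, every coefficient c_i lies on or above the line through (0, -r) of slope r / d, so
   solving f m0 = 0 for its top (resp. bottom) term shows by induction that the vectors
   sigma^e(k) t^k m0, k in Z, all lie in the O-span Lam of those with 0 <= k < d.  As
   e(k + d) = e(k) + r, the map sigma^r t^d shifts these vectors by d, so it maps Lam onto
   itself; when r > 0, e is nondecreasing and t^-1 Lam is contained in Lam.
   For uniqueness, two lattices are commensurable: sigma^a Lam1 <= Lam2 and sigma^b Lam2 <=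
   Lam1.  Iterating sigma^r t^d on Lam and sigma^w t^u on Lam' k times then shows that one of
   them is mapped into itself by sigma^(a + b - k |w d - u r|), impossible for large k
   when w d <> u r, because coordinates of lattice vectors have valuations bounded below. *)

Section Valuation.
Variables (L : unitRingType) (v : L -> int).
Hypotheses (HL : is_skew_field L) (Hv : is_discrete_valuation v).

Lemma skew_mul_neq0 (x y : L) : x != 0 -> y != 0 -> x * y != 0.
Proof.
move=> x0 y0; apply: contra_neq y0 => xy0.
by rewrite -(mulKr (HL x0) y) xy0 mulr0.
Qed.

Lemma valuation1 : v 1 = 0.
Proof. have := Hv.1 1 1 (oner_neq0 L) (oner_neq0 L); rewrite mulr1; lia. Qed.

Lemma valuationV (x : L) : x != 0 -> v x^-1 = - v x.
Proof.
move=> x0; have := Hv.1 x x^-1 x0; rewrite invr_eq0 mulrV ?HL // valuation1.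
move/(_ x0); lia.
Qed.

Lemma valuationN1 : v (-1) = 0.
Proof.
have N10 : (-1 : L) != 0 by rewrite oppr_eq0 oner_neq0.
have := Hv.1 _ _ N10 N10; rewrite mulrNN mulr1 valuation1; lia.
Qed.

Lemma valuationN (x : L) : x != 0 -> v (- x) = v x.
Proof.
move=> x0; rewrite -mulN1r Hv.1 ?valuationN1 ?add0r //.
by rewrite oppr_eq0 oner_neq0.
Qed.

Lemma vge0r (n : int) : vge v 0 n.
Proof. by rewrite /vge eqxx. Qed.

Lemma vge_valuation (x : L) : vge v x (v x).
Proof. by rewrite /vge lexx orbT. Qed.

Lemma vge_mul (x y : L) (a b : int) : vge v x a -> vge v y b -> vge v (x * y) (a + b).
Proof.
rewrite /vge; have [->|x0] := eqVneq x 0; first by rewrite mul0r eqxx.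
have [->|y0] := eqVneq y 0; first by rewrite mulr0 eqxx.
by rewrite /= (negPf (skew_mul_neq0 x0 y0)) Hv.1 //; lia.
Qed.

Lemma vge_trans (x : L) (a b : int) : vge v x a -> b <= a -> vge v x b.
Proof. rewrite /vge; case: (x == 0) => //=; lia. Qed.

Lemma vge_sum (I : Type) (s : seq I) (P : pred I) (F : I -> L) (a : int) :
  (forall i, P i -> vge v (F i) a) -> vge v (\sum_(i <- s | P i) F i) a.
Proof.
move=> Fa; apply: (big_ind (vge v ^~ a)) => //; first exact: vge0r.
by move=> x y; apply: Hv.2.
Qed.

Lemma vge_Nnorm (x : L) (N : int) : `|v x| <= N -> vge v x (- N).
Proof.
rewrite /vge => vxN; case: (x == 0) => //=.
by have := ler_norm (v x); have := ler_normr (v x) N; lia.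
Qed.

Section Span.
Variable M : lmodType L.

Definition Ospan (g : seq M) (x : M) : Prop :=
  exists2 a : nat -> L, forall j, vge v (a j) 0 & x = \sum_(j < size g) a j *: g`_j.

Lemma in_OspanE (g : seq M) (x : M) : in_Ospan v g x <-> Ospan g x.
Proof.
split=> [[a [a0 ->]]|[a a0 ->]]; last by exists (fun i => a (val i)).
exists (fun j => if insub j is Some i then a i else 0).
  by move=> j; case: insub => [i|] //; apply: vge0r.
by apply: eq_bigr => i _; rewrite valK.
Qed.

Lemma Ospan_nth (g : seq M) (j : nat) : (j < size g)%N -> Ospan g g`_j.
Proof.
move=> jg; exists (fun k => (k == j)%:R).
  move=> k; case: (k == j); last exact: vge0r.
  by apply: vge_trans (vge_valuation _) _; rewrite valuation1.
rewrite (bigD1 (Ordinal jg)) //= eqxx scale1r big1 ?addr0 // => i ij.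
by rewrite -val_eqE /= in ij; rewrite (negPf ij) scale0r.
Qed.

Lemma Ospan0 (g : seq M) : Ospan g 0.
Proof.
exists (fun _ => 0) => [_|]; first exact: vge0r.
by rewrite big1 // => i _; rewrite scale0r.
Qed.

Lemma OspanD (g : seq M) (x y : M) : Ospan g x -> Ospan g y -> Ospan g (x + y).
Proof.
move=> [a a0 ->] [b b0 ->]; exists (fun j => a j + b j) => [j|]; first exact: Hv.2.
by rewrite -big_split; apply: eq_bigr => i _; rewrite scalerDl.
Qed.

Lemma OspanZ (g : seq M) (c : L) (x : M) : vge v c 0 -> Ospan g x -> Ospan g (c *: x).
Proof.
move=> c0 [a a0 ->]; exists (fun j => c * a j) => [j|].
  by rewrite -(addr0 0); apply: vge_mul.
by rewrite scaler_sumr; apply: eq_bigr => i _; rewrite scalerA.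
Qed.

Lemma Ospan_sum (g : seq M) (I : Type) (s : seq I) (P : pred I) (c : I -> L) (y : I -> M) :
  (forall i, P i -> vge v (c i) 0) -> (forall i, P i -> Ospan g (y i)) ->
  Ospan g (\sum_(i <- s | P i) c i *: y i).
Proof.
move=> c0 gy; apply: (big_ind (Ospan g)); [exact: Ospan0 | exact: OspanD |].
by move=> i Pi; apply: OspanZ; [apply: c0 | apply: gy].
Qed.

Lemma basis_coord_unique (n : nat) (b : 'I_n -> M) (a a' : 'I_n -> L) :
  is_L_basis b -> \sum_i a i *: b i = \sum_i a' i *: b i -> a =1 a'.
Proof.
move=> bB aa' i; apply/eqP; rewrite -subr_eq0; apply/eqP.
apply: (bB.1 (fun i => a i - a' i)).
under eq_bigr do rewrite scalerBl.
by rewrite sumrB aa' subrr.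
Qed.

Lemma basis_decomp (g : seq M) (n : nat) (b : 'I_n -> M) : is_L_basis b ->
  exists2 beta : 'I_(size g) -> 'I_n -> L,
    forall j : 'I_(size g), g`_j = \sum_i beta j i *: b i &
    forall a : nat -> L,
      \sum_(j < size g) a j *: g`_j = \sum_i (\sum_(j < size g) a j * beta j i) *: b i.
Proof.
move=> bB; have [beta gbeta] := fin_all_exists (fun j : 'I_(size g) => bB.2 g`_j).
exists beta => // a; under eq_bigr => j _ do rewrite (gbeta j) scaler_sumr.
rewrite exchange_big /=; apply: eq_bigr => i _.
by rewrite scaler_suml; apply: eq_bigr => j _; rewrite scalerA.
Qed.

Lemma sum_norm_ge (m n : nat) (F : 'I_m -> 'I_n -> int) (j : 'I_m) (i : 'I_n) :
  `|F j i| <= \sum_(j' < m) \sum_(i' < n) `|F j' i'|.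
Proof.
apply: le_trans (_ : \sum_(i' < n) `|F j i'| <= _).
  by rewrite (bigD1 i) //= lerDl sumr_ge0.
by rewrite (bigD1 j) //= lerDl sumr_ge0 // => k _; apply: sumr_ge0.
Qed.

Lemma lattice_coord_bounded (Lam : M -> Prop) (n : nat) (b : 'I_n -> M) :
  is_O_lattice v Lam -> is_L_basis b ->
  exists N : int, forall x a, Lam x -> x = \sum_i a i *: b i -> forall i, vge v (a i) N.
Proof.
move=> [[g gLam] _] bB; have [beta _ gsum] := basis_decomp g bB.
exists (- \sum_(j < size g) \sum_(i < n) `|v (beta j i)|) => x alpha /gLam/in_OspanE[a a0 ->] xa i.
rewrite (basis_coord_unique bB (etrans (esym xa) (gsum a))).
apply: vge_sum => j _; rewrite -(add0r (- _)); apply: vge_mul => //.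
exact/vge_Nnorm/sum_norm_ge.
Qed.

Lemma lattice_neq0 (Lam : M -> Prop) (x : M) :
  is_O_lattice v Lam -> x != 0 -> exists2 y, Lam y & y != 0.
Proof.
move=> [_ [n [b [bLam [_ bspan]]]]] x0; have [a xa] := bspan x.
have [i bi0|b0] := pickP (fun i => b i != 0); first by exists (b i).
move: x0; rewrite xa big1 ?eqxx // => i _.
by move/negbFE/eqP: (b0 i) ->; rewrite scaler0.
Qed.

End Span.

Section Uniformizer.
Variable sigma : L.
Hypotheses (Hsigma0 : sigma != 0) (Hsigma : v sigma = 1).

Lemma expz_sigma_neq0 (n : int) : sigma ^ n != 0.
Proof.
have expn_neq0 (k : nat) : sigma ^+ k != 0.
  by elim: k => [|k IHk]; rewrite ?expr0 ?oner_neq0 // exprS skew_mul_neq0.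
by case: n => k; rewrite ?NegzE -?exprnN ?invr_neq0 ?expn_neq0.
Qed.

Lemma expz_sigma_unit (n : int) : sigma ^ n \is a GRing.unit.
Proof. exact/HL/expz_sigma_neq0. Qed.

Lemma valuation_expz_sigma (n : int) : v (sigma ^ n) = n.
Proof.
have vexpn (k : nat) : v (sigma ^+ k) = k.
  elim: k => [|k IHk]; first by rewrite expr0 valuation1.
  by rewrite exprS (Hv.1 _ _ Hsigma0 (expz_sigma_neq0 k)) IHk Hsigma; lia.
case: n => k; first exact: vexpn.
by rewrite NegzE -exprnN valuationV ?vexpn //; apply: (expz_sigma_neq0 k.+1).
Qed.

Lemma expz_sigmaD (m n : int) : sigma ^ (m + n) = sigma ^ m * sigma ^ n.
Proof. exact/exprzDr/HL. Qed.

Lemma vge_expz_sigma (n : int) : vge v (sigma ^ n) n.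
Proof. by rewrite -{2}(valuation_expz_sigma n) vge_valuation. Qed.

Lemma vge_conj_sigma (a b n : int) (x : L) :
  vge v x n -> vge v (sigma ^ a * x * sigma ^ b) (a + n + b).
Proof. by move=> xn; apply: vge_mul; [apply: vge_mul | ]; rewrite ?vge_expz_sigma. Qed.

Lemma vge0_conj_sigma (p : int) (a : L) :
  vge v a 0 -> vge v (sigma ^ p * a * sigma ^ (- p)) 0.
Proof. by move/(vge_conj_sigma p (- p)); rewrite addr0 addrN. Qed.

Section Lattice.
Variable M : lmodType L.

Lemma scale_expz_sigma (p q : int) (x : M) :
  sigma ^ p *: (sigma ^ q *: x) = sigma ^ (p + q) *: x.
Proof. by rewrite scalerA expz_sigmaD. Qed.

Lemma scale_conj_sigma (p q : int) (a : L) (x : M) :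
  sigma ^ p *: (a *: x) = (sigma ^ p * a * sigma ^ (- q)) *: (sigma ^ q *: x).
Proof. by rewrite !scalerA -!mulrA -expz_sigmaD addNr expr0z mulr1. Qed.

(* The coordinates of a lattice vector in a fixed basis have bounded-below valuation,
   while those of [sigma ^ (k m) *: x] tend to -oo when [m < 0]. *)
Lemma lattice_not_contracting (Lam : M -> Prop) (x : M) (m : int) :
  is_O_lattice v Lam -> Lam x -> x != 0 -> m < 0 ->
  ~ (forall y, Lam y -> Lam (sigma ^ m *: y)).
Proof.
move=> Lat Lx x0 m0 Lstable; have [_ [n [b [_ bB]]]] := Lat.
have [N Nbound] := lattice_coord_bounded Lat bB.
have [alpha xalpha] := bB.2 x.
have [i ai0] : exists i, alpha i != 0.
  have [i|alpha0] := pickP (fun i => alpha i != 0); first by exists i.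
  move: x0; rewrite xalpha big1 ?eqxx // => i _.
  by move/negbFE/eqP: (alpha0 i) ->; rewrite scale0r.
have Lpow (k : nat) : Lam (sigma ^ (m * k%:Z) *: x).
  elim: k => [|k IHk]; first by rewrite mulr0 expr0z scale1r.
  by rewrite -[k.+1]addn1 PoszD mulrDr mulr1 addrC -scale_expz_sigma; apply: Lstable.
pose k := `|N - v (alpha i)|%N.+1.
have := Nbound _ (fun j => sigma ^ (m * k%:Z) * alpha j) (Lpow k).
rewrite xalpha scaler_sumr; under eq_bigr do rewrite scalerA.
move/(_ erefl i); rewrite /vge (negPf (skew_mul_neq0 (expz_sigma_neq0 _) ai0)) /=.
rewrite Hv.1 ?expz_sigma_neq0 // valuation_expz_sigma.
have : N - v (alpha i) <= `|N - v (alpha i)|%N by rewrite abszE ler_norm.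
rewrite /k; nia.
Qed.

Lemma lattice_commensurable (Lam1 Lam2 : M -> Prop) :
  is_O_lattice v Lam1 -> is_O_lattice v Lam2 ->
  exists2 a : int, 0 <= a & forall x, Lam1 x -> Lam2 (sigma ^ a *: x).
Proof.
move=> [[g1 g1Lam] _] [[g2 g2Lam] [n [b [bLam bB]]]].
have [beta g1beta _] := basis_decomp g1 bB.
set a := \sum_(j < size g1) \sum_(i < n) `|v (beta j i)|.
exists a; first by apply: sumr_ge0 => j _; apply: sumr_ge0.
move=> _ /g1Lam/in_OspanE[c c0 ->]; apply/g2Lam/in_OspanE.
rewrite scaler_sumr; under eq_bigr do rewrite (scale_conj_sigma a a).
apply: Ospan_sum => j _; first exact: vge0_conj_sigma.
rewrite g1beta scaler_sumr; under eq_bigr do rewrite scalerA.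
apply: Ospan_sum => i _; last exact/in_OspanE/g2Lam.
rewrite -(subrr a); apply: vge_mul; first exact: vge_expz_sigma.
exact/vge_Nnorm/sum_norm_ge.
Qed.

Section Operator.
Variable T : M -> M.
Hypothesis HT : forall (a : L) (x y : M), T (a *: x + y) = a *: T x + T y.

Lemma linT0 : T 0 = 0.
Proof.
have := HT 1 0 0; rewrite scale1r !addr0 scale1r.
by move/(congr1 (fun z => z - T 0)); rewrite subrr addrK.
Qed.

Lemma linTD (x y : M) : T (x + y) = T x + T y.
Proof. by have := HT 1 x y; rewrite !scale1r. Qed.

Lemma linTZ (a : L) (x : M) : T (a *: x) = a *: T x.
Proof. by rewrite -[a *: x]addr0 HT linT0 addr0. Qed.

Lemma linTB (x y : M) : T (x - y) = T x - T y.
Proof. by rewrite -scaleN1r linTD linTZ scaleN1r. Qed.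

Lemma iterT0 (n : nat) : iter n T 0 = 0.
Proof. by elim: n => //= n ->; rewrite linT0. Qed.

Lemma iterTZ (n : nat) (a : L) (x : M) : iter n T (a *: x) = a *: iter n T x.
Proof. by elim: n => //= n ->; rewrite linTZ. Qed.

Lemma iterT_sum (n : nat) (I : Type) (s : seq I) (P : pred I) (F : I -> M) :
  iter n T (\sum_(i <- s | P i) F i) = \sum_(i <- s | P i) iter n T (F i).
Proof.
elim/big_rec2: _ => [|i y1 y2 _ <-]; first exact: iterT0.
by elim: n => //= n ->; rewrite linTD.
Qed.

Lemma T_sum (I : Type) (s : seq I) (P : pred I) (F : I -> M) :
  T (\sum_(i <- s | P i) F i) = \sum_(i <- s | P i) T (F i).
Proof. exact: (iterT_sum 1). Qed.

Definition maps_into (Lam : M -> Prop) (p : int) (n : nat) : Prop :=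
  forall y, Lam y -> Lam (sigma ^ p *: iter n T y).

Definition covers (Lam : M -> Prop) (p : int) (n : nat) : Prop :=
  forall z, Lam z -> exists2 y, Lam y & z = sigma ^ p *: iter n T y.

Lemma scale_iter_sigma (p q : int) (n k : nat) (y : M) :
  sigma ^ p *: iter n T (sigma ^ q *: iter k T y) = sigma ^ (p + q) *: iter (n + k) T y.
Proof. by rewrite iterTZ scale_expz_sigma iterD. Qed.

Lemma maps_into_iter (Lam : M -> Prop) (p : int) (n k : nat) :
  maps_into Lam p n -> maps_into Lam (k%:Z * p) (k * n).
Proof.
move=> Lp; elim: k => [|k IHk] y Ly; first by rewrite mul0r expr0z scale1r.
by rewrite -[k.+1]addn1 PoszD mulrDl mul1r mulnDl mul1n addrC addnC -scale_iter_sigma; apply/Lp/IHk.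
Qed.

Lemma covers_iter (Lam : M -> Prop) (p : int) (n k : nat) :
  covers Lam p n -> covers Lam (k%:Z * p) (k * n).
Proof.
move=> Lp; elim: k => [|k IHk] z Lz; first by exists z; rewrite // mul0r expr0z scale1r.
have [y1 Ly1 ->] := Lp _ Lz; have [y2 Ly2 ->] := IHk _ Ly1.
by exists y2; rewrite // scale_iter_sigma -[k.+1]addn1 PoszD mulrDl mul1r mulnDl mul1n addrC addnC.
Qed.

Lemma Ospan_maps_into (g : seq M) (p : int) (n : nat) :
  (forall j, (j < size g)%N -> Ospan g (sigma ^ p *: iter n T g`_j)) ->
  maps_into (Ospan g) p n.
Proof.
move=> gp _ [a a0 ->]; rewrite iterT_sum scaler_sumr.
under eq_bigr do rewrite iterTZ (scale_conj_sigma p p).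
by apply: Ospan_sum => j _; [apply: vge0_conj_sigma | apply: gp].
Qed.

Lemma Ospan_covers (g : seq M) (p : int) (n : nat) :
  (forall j, (j < size g)%N -> exists2 y, Ospan g y & g`_j = sigma ^ p *: iter n T y) ->
  covers (Ospan g) p n.
Proof.
move=> gp _ [a a0 ->].
have [Y gY gYT] := fin_all_exists2 (fun j : 'I_(size g) => gp j (ltn_ord j)).
exists (\sum_(j < size g) (sigma ^ (- p) * a j * sigma ^ p) *: Y j).
  apply: Ospan_sum => j _ //.
  by have := vge0_conj_sigma (- p) (a0 j); rewrite opprK.
rewrite iterT_sum scaler_sumr; apply: eq_bigr => j _.
rewrite iterTZ scalerA !mulrA -expz_sigmaD addrN expr0z mul1r -scalerA.
by rewrite -gYT.
Qed.

(* Commensurability and [k]-fold iteration make [Lb] stable under [sigma] to the power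
   [a1 + a2 + k (p m - q n)], which must therefore stay nonnegative. *)
Lemma stable_lattice_slope_le (La Lb : M -> Prop) (p q : int) (m n : nat) (x0 : M) :
  is_O_lattice v La -> is_O_lattice v Lb -> x0 != 0 ->
  covers La q m -> maps_into Lb p n -> q * n%:Z <= p * m%:Z.
Proof.
move=> LatA LatB x00 Acov Binto.
have [a1 a10 AB] := lattice_commensurable LatA LatB.
have [a2 a20 BA] := lattice_commensurable LatB LatA.
have [y By y0] := lattice_neq0 LatB x00.
rewrite leNgt; apply/negP => slope_lt.
pose K := (absz (a1 + a2)).+1.
have Acov' := covers_iter (K * n) Acov.
have Binto' := maps_into_iter (K * m) Binto.
apply: (lattice_not_contracting (m := a1 + a2 + (K * m)%:Z * p - (K * n)%:Z * q) LatB By y0).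
  by rewrite /K !PoszM; nia.
move=> x Bx; have [z Az xz] := Acov' _ (BA _ Bx).
have := Binto' _ (AB _ Az); rewrite iterTZ scale_expz_sigma mulnAC.
suff -> : iter (K * n * m) T z = sigma ^ (a2 - (K * n)%:Z * q) *: x.
  by rewrite scale_expz_sigma; congr (Lb (_ ^ _ *: _)); ring.
by rewrite addrC -scale_expz_sigma xz scale_expz_sigma addNr expr0z scale1r.
Qed.

Lemma img_st_PoszE (Lam : M -> Prop) (w : int) (n : nat) :
  set_eq (img_st T sigma w n Lam) Lam <-> maps_into Lam w n /\ covers Lam w n.
Proof.
split=> [eqLam | [Linto Lcov] z].
  split=> [y Ly | z /eqLam [x [y [Lx [xy ->]]]]]; first by apply/eqLam; exists y, (iter n T y).
  by exists x; rewrite // /tpow /= in xy; rewrite xy.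
split=> [[x [y [Lx [xy ->]]]] | /Lcov [y Ly ->]]; last by exists y, (iter n T y).
by rewrite /tpow /= in xy; rewrite xy; apply: Linto.
Qed.

Lemma img_st_Negz (Lam : M -> Prop) (w : int) (n : nat) (Tinv : M -> M) :
  cancel Tinv T -> set_eq (img_st T sigma w (Negz n) Lam) Lam ->
  maps_into Lam (- w) n.+1 /\ covers Lam (- w) n.+1.
Proof.
move=> TK eqLam; have iterTK x : iter n.+1 T (iter n.+1 Tinv x) = x.
  by elim: n.+1 x => [|k IHk] x //; rewrite iterSr iterS TK IHk.
split=> [_ /eqLam [x [y [Lx [xy ->]]]] | x Lx].
  by rewrite /tpow /= -xy in Lx; rewrite iterTZ scale_expz_sigma addNr expr0z scale1r.
exists (sigma ^ w *: iter n.+1 Tinv x).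
  by apply/eqLam; exists x, (iter n.+1 Tinv x); split => //; split => //; apply: iterTK.
by rewrite iterTZ scale_expz_sigma addNr expr0z scale1r iterTK.
Qed.

Lemma img_st_T_sub (Lam : M -> Prop) :
  (forall y, Lam (T y) -> Lam y) -> set_sub (img_st T sigma 0 (-1) Lam) Lam.
Proof.
move=> LT _ [x [y [Lx [xy ->]]]]; rewrite /tpow /= in xy.
by rewrite expr0z scale1r; apply: LT; rewrite xy.
Qed.

Section CyclicModule.
Variables (f : {poly L}) (d : nat) (m0 : M).
Hypotheses (Hd : (0 < d)%N) (Hmonic : f \is monic) (Hsize : size f = d.+1) (Hc0 : f`_0 != 0).
Hypothesis Hspan : forall x : M, exists p : {poly L}, x = poly_act T p m0.
Hypothesis Hker : forall p : {poly L}, poly_act T p m0 = 0 <-> exists q : {poly L}, p = q * f.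

Lemma poly_act_widen (p : {poly L}) (n : nat) (x : M) : (size p <= n)%N ->
  poly_act T p x = \sum_(i < n) p`_i *: iter i T x.
Proof.
move=> pn; rewrite /poly_act (big_ord_widen n (fun i => p`_i *: iter i T x) pn) big_mkcond /=.
apply: eq_bigr => i _; case: ifP => // /negbT; rewrite -leqNgt => pi.
by rewrite nth_default // scale0r.
Qed.

Lemma poly_act_f : \sum_(i < d.+1) f`_i *: iter i T m0 = 0.
Proof. by rewrite -(poly_act_widen _ (eq_leq Hsize)); apply/Hker; exists 1; rewrite mul1r. Qed.

Lemma coef_f_d : f`_d = 1.
Proof. by have := monicP Hmonic; rewrite /lead_coef Hsize. Qed.

Lemma poly_act_small_eq0 (p : {poly L}) : (size p <= d)%N -> poly_act T p m0 = 0 -> p = 0.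
Proof.
move=> pd /Hker[q pqf]; apply/eqP/negPn/negP => p0.
have q0 : q != 0 by move: p0; rewrite pqf; apply: contraNneq => ->; rewrite mul0r.
by move: pd; rewrite pqf (size_Mmonic q0 Hmonic) Hsize; have := size_poly_gt0 q; rewrite q0; lia.
Qed.

Lemma m0_neq0 : m0 != 0.
Proof.
apply/eqP => m00; have := @poly_act_small_eq0 1; rewrite size_poly1 => /(_ Hd).
by rewrite /poly_act size_poly1 big_ord1 m00 scaler0 => /(_ erefl)/eqP; rewrite oner_eq0.
Qed.

(* [y0] solves [t y0 = m0]: the relation [f m0 = 0] divided by [t c_0]. *)
Definition y0 : M := - \sum_(i < d) ((f`_0)^-1 * f`_i.+1) *: iter i T m0.

Lemma T_y0 : T y0 = m0.
Proof.
have := poly_act_f; rewrite big_ord_recl /= => /eqP; rewrite addrC addr_eq0 => /eqP frel.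
rewrite /y0 -scaleN1r linTZ T_sum.
under eq_bigr do rewrite linTZ -scalerA.
by rewrite -scaler_sumr frel scalerN scaleN1r opprK scalerA mulVr ?HL // scale1r.
Qed.

Lemma T_surj (x : M) : exists y, T y == x.
Proof.
have [p ->] := Hspan x.
exists (\sum_(i < size p) p`_i *: (if (i : nat) is j.+1 then iter j T m0 else y0)).
rewrite T_sum /poly_act; apply/eqP/eq_bigr => i _; rewrite linTZ.
by case: (nat_of_ord i) => [|j] //=; rewrite T_y0.
Qed.

Lemma poly_act_mulX (p : {poly L}) : poly_act T ('X * p) m0 = T (poly_act T p m0).
Proof.
have Xp : (size ('X * p)%R <= (size p).+1)%N.
  by rewrite -commr_polyX; have [->|p0] := eqVneq p 0; rewrite ?mul0r ?size_poly0 ?size_mulX.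
rewrite (poly_act_widen _ Xp) big_ord_recl coefXM eqxx scale0r add0r.
by rewrite /poly_act T_sum; apply: eq_bigr => i _; rewrite coefXM /= linTZ.
Qed.

(* [t] is injective because [t p m0 = 0] with [f | X p] and [c_0 != 0] forces [f | p]. *)
Lemma T_inj : injective T.
Proof.
suff T0 y : T y = 0 -> y = 0.
  by move=> x y Txy; apply/eqP; rewrite -subr_eq0; apply/eqP/T0; rewrite linTB Txy subrr.
have [p ->] := Hspan y; rewrite -poly_act_mulX => /Hker[h Xph].
have h0 : h`_0 = 0.
  move/(congr1 (fun q : {poly L} => q`_0)): Xph.
  rewrite coefXM eqxx coefM big_ord1 /= subn0 => /esym h0f0.
  by rewrite -(mulrK (HL Hc0) h`_0) h0f0 mul0r.
set h' := \poly_(i < size h) h`_i.+1.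
have hX : h = 'X * h'.
  apply/polyP => -[|j]; rewrite coefXM //= coef_poly; case: ifP => // /negbT.
  by rewrite -leqNgt => hj; rewrite nth_default // (leq_trans hj).
apply/Hker; exists h'; apply/polyP => i.
by move/(congr1 (fun q : {poly L} => q`_i.+1)): Xph; rewrite hX -mulrA !coefXM.
Qed.

Definition Tinv (x : M) : M := xchoose (T_surj x).

Lemma TinvK : cancel Tinv T.
Proof. by move=> x; apply/eqP/(xchooseP (T_surj x)). Qed.

Definition tm0 (k : int) : M :=
  match k with Posz n => iter n T m0 | Negz n => iter n.+1 Tinv m0 end.

Lemma T_tm0 (k : int) : T (tm0 k) = tm0 (k + 1).
Proof.
case: k => [n|[|n]]; first by have -> : Posz n + 1 = n.+1 by lia.
  by rewrite /= TinvK.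
have -> : Negz n.+1 + 1 = Negz n by rewrite !NegzE; lia.
by rewrite /= TinvK.
Qed.

Lemma iter_tm0 (n : nat) (k : int) : iter n T (tm0 k) = tm0 (k + n%:Z).
Proof.
elim: n => [|n IHn]; first by rewrite addr0.
by rewrite iterS IHn T_tm0 -addrA -[n.+1]addn1 PoszD.
Qed.

Lemma f_relation (k : int) : \sum_(i < d.+1) f`_i *: tm0 (k + i%:Z) = 0.
Proof.
pose rel k := \sum_(i < d.+1) f`_i *: tm0 (k + i%:Z).
have relS k' : T (rel k') = rel (k' + 1).
  by rewrite T_sum; apply: eq_bigr => i _; rewrite linTZ T_tm0 addrAC.
have relP (n : nat) : rel n = 0.
  rewrite /rel; under eq_bigr => i _ do rewrite addrC -iter_tm0 -iterTZ.
  by rewrite -iterT_sum poly_act_f iterT0.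
have relN (n : nat) : rel (- n%:Z) = 0.
  elim: n => [|n IHn]; first exact: (relP 0).
  by apply: T_inj; rewrite relS linT0 -[RHS]IHn; congr rel; lia.
by case: k => n; [apply: relP | rewrite NegzE; apply: relN].
Qed.

Section NewtonEdge.
Variable r : int.
Hypotheses (Hf0 : v f`_0 = - r)
  (Hedge : forall i, (i <= d)%N -> f`_i != 0 -> r * (i%:Z - d%:Z) <= d%:Z * v f`_i).

(* [height k - r] is the Newton edge from [(0, -r)] to [(d, 0)] at [k], rounded down. *)
Definition height (k : int) : int := ((k * r) %/ d)%Z.

Lemma height_diff_le (j k c : int) : r * (j - k) <= d%:Z * c -> height j - height k <= c.
Proof.
move=> jkc; rewrite /height.
have d0 : d%:Z != 0 by lia.
have := divz_eq (k * r) d; have := divz_eq (j * r) d.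
have := modz_ge0 (k * r) d0; have := modz_ge0 (j * r) d0.
have := ltz_mod (k * r) d0; have := ltz_mod (j * r) d0.
rewrite /absz /=; nia.
Qed.

Lemma heightDd (k : int) : height (k + d%:Z) = height k + r.
Proof. by rewrite /height mulrDl addrC [d%:Z * r]mulrC divzMDl 1?addrC //; lia. Qed.

Lemma height_pred_le (k : int) : 0 <= r -> height (k - 1) <= height k.
Proof. by move=> r0; apply: lez_pdiv2r => //; nia. Qed.

Definition gen (k : int) : M := sigma ^ height k *: tm0 k.

Definition gens : seq M := [seq gen i%:Z | i <- iota 0 d].

Lemma size_gens : size gens = d.
Proof. by rewrite size_map size_iota. Qed.

Lemma nth_gens (j : nat) : (j < d)%N -> gens`_j = gen j.
Proof. by move=> jd; rewrite (nth_map 0%N) ?size_iota // nth_iota. Qed.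

Lemma gen_combination (m : nat) (k : int) (c : 'I_m -> L) (j : 'I_m -> int) :
  tm0 k = \sum_i c i *: tm0 (j i) ->
  (forall i, c i != 0 -> 0 <= height k + v (c i) - height (j i)) ->
  (forall i, Ospan gens (gen (j i))) -> Ospan gens (gen k).
Proof.
move=> tm0k c0 genj; rewrite /gen tm0k scaler_sumr.
under eq_bigr => i _ do rewrite (scale_conj_sigma _ (height (j i))).
apply: Ospan_sum => i _; last exact: genj.
have [->|ci0] := eqVneq (c i) 0; first by rewrite mulr0 mul0r vge0r.
by apply: vge_trans (vge_conj_sigma _ _ (vge_valuation _)) _; move: (c0 i ci0); lia.
Qed.

Lemma gen_in_span_nat (n : nat) : Ospan gens (gen n).
Proof.
elim/ltn_ind: n => n IHn; have [nd|dn] := ltnP n d.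
  by rewrite -nth_gens //; apply: Ospan_nth; rewrite size_gens.
have := f_relation (n%:Z - d%:Z); rewrite big_ord_recr /= coef_f_d scale1r subrK.
move/eqP; rewrite addrC addr_eq0 => /eqP tm0n.
apply: (gen_combination (c := fun i => - f`_i) (j := fun i : 'I_d => n%:Z - d%:Z + i%:Z)).
- by rewrite tm0n -sumrN; apply: eq_bigr => i _; rewrite scaleNr.
- move=> i; rewrite oppr_eq0 => fi0; rewrite valuationN //.
  suff : height (n%:Z - d%:Z + i%:Z) - height n <= v f`_i by lia.
  apply: height_diff_le; have -> : n%:Z - d%:Z + i%:Z - n%:Z = i%:Z - d%:Z by ring.
  exact: Hedge (ltnW (ltn_ord i)) fi0.
- move=> i; have -> : n%:Z - d%:Z + i%:Z = (n - d + i)%N by lia.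
  by apply: IHn; have := ltn_ord i; lia.
Qed.

Lemma gen_in_span_neg (n : nat) : Ospan gens (gen (- n%:Z)).
Proof.
elim/ltn_ind: n => -[_|m IHm]; first exact: (gen_in_span_nat 0).
set k := - (m.+1)%:Z.
have := f_relation k; rewrite big_ord_recl addr0 /= => /eqP; rewrite addr_eq0 => /eqP f0k.
apply: (gen_combination (c := fun i : 'I_d => - ((f`_0)^-1 * f`_i.+1))
                        (j := fun i : 'I_d => k + i.+1%:Z)).
- rewrite -[tm0 k]scale1r -(mulVr (HL Hc0)) -scalerA f0k scalerN scaler_sumr -sumrN.
  by apply: eq_bigr => i _; rewrite scalerA scaleNr.
- move=> i; rewrite oppr_eq0 => cfi0; rewrite valuationN //.
  have fi0 : f`_i.+1 != 0 by apply: contraNneq cfi0 => ->; rewrite mulr0.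
  rewrite Hv.1 ?invr_eq0 // valuationV // Hf0 opprK.
  suff : height (k + i.+1%:Z) - height k <= r + v f`_i.+1 by lia.
  apply: height_diff_le; have := Hedge (ltn_ord i) fi0.
  have -> : k + i.+1%:Z - k = i.+1%:Z by ring.
  nia.
- move=> i; rewrite /k; have [mi|im] := leqP m i.
    have -> : - (m.+1)%:Z + i.+1%:Z = (i - m)%N by lia.
    exact: gen_in_span_nat.
  have -> : - (m.+1)%:Z + i.+1%:Z = - (m - i)%N%:Z by lia.
  by apply: IHm; lia.
Qed.

Lemma gen_in_span (k : int) : Ospan gens (gen k).
Proof. by case: k => n; [apply: gen_in_span_nat | rewrite NegzE; apply: gen_in_span_neg]. Qed.

Lemma gens_maps_into : maps_into (Ospan gens) r d.
Proof.
apply: Ospan_maps_into => j; rewrite size_gens => jd.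
rewrite nth_gens // /gen iterTZ scale_expz_sigma iter_tm0 addrC -heightDd.
exact: gen_in_span.
Qed.

Lemma gens_covers : covers (Ospan gens) r d.
Proof.
apply: Ospan_covers => j; rewrite size_gens => jd.
exists (gen (j%:Z - d%:Z)); first exact: gen_in_span.
by rewrite nth_gens // /gen iterTZ scale_expz_sigma iter_tm0 addrC -heightDd !subrK.
Qed.

Lemma sum_gensE (F : nat -> L) :
  \sum_(l < size gens) F l *: gens`_l = \sum_(i < d) F i *: gen i.
Proof.
rewrite -(big_mkord xpredT (fun l => F l *: gens`_l)) size_gens big_mkord.
by apply: eq_bigr => i _; rewrite nth_gens.
Qed.

Lemma gens_free (a : 'I_d -> L) : \sum_i a i *: gen i = 0 -> forall i, a i = 0.
Proof.
move=> a0 i; pose p := \poly_(j < d) (a (insubd (Ordinal Hd) j) * sigma ^ height j).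
have insubdK (k : 'I_d) : insubd (Ordinal Hd) k = k.
  by apply: val_inj; rewrite val_insubd ltn_ord.
have p0 : p = 0.
  apply: poly_act_small_eq0; first exact: size_poly.
  rewrite (poly_act_widen _ (size_poly _ _)) -[RHS]a0.
  by apply: eq_bigr => k _; rewrite coef_poly ltn_ord insubdK -scalerA.
move/(congr1 (fun q : {poly L} => q`_i)): p0; rewrite coef0 coef_poly ltn_ord insubdK => ai0.
by rewrite -(mulrK (expz_sigma_unit (height i)) (a i)) ai0 mul0r.
Qed.

Lemma gens_spanning (x : M) : exists a : 'I_d -> L, x = \sum_i a i *: gen i.
Proof.
have tm0_span (j : nat) : exists c : 'I_d -> L, tm0 j = \sum_i c i *: gen i.
  have [a _ ga] := gen_in_span j; exists (fun i => sigma ^ (- height j) * a i).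
  have -> : tm0 j = sigma ^ (- height j) *: gen j.
    by rewrite /gen scale_expz_sigma addNr expr0z scale1r.
  rewrite ga scaler_sumr -(sum_gensE (fun l => sigma ^ (- height j) * a l)).
  by apply: eq_bigr => l _; rewrite scalerA.
have [p ->] := Hspan x.
have [C tm0C] := fin_all_exists (fun j : 'I_(size p) => tm0_span j).
exists (fun i => \sum_(j < size p) p`_j * C j i).
rewrite /poly_act; under eq_bigr => j _ do rewrite [iter _ T m0](tm0C j) scaler_sumr.
rewrite exchange_big /=; apply: eq_bigr => i _.
by rewrite scaler_suml; apply: eq_bigr => j _; rewrite scalerA.
Qed.

Lemma gens_lattice : is_O_lattice v (Ospan gens).
Proof.
split; first by exists gens => x; rewrite in_OspanE.
exists d, (fun i : 'I_d => gen i); split; first by move=> i; apply: gen_in_span.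
by split; [apply: gens_free | apply: gens_spanning].
Qed.

Lemma gens_T_preimage (y : M) : 0 <= r -> Ospan gens (T y) -> Ospan gens y.
Proof.
move=> r0 [a a0 Tya].
have -> : y = \sum_(l < size gens) a l *: (sigma ^ height l *: tm0 (l%:Z - 1)).
  apply: T_inj; rewrite Tya T_sum; apply: eq_bigr => l _.
  by rewrite !linTZ T_tm0 subrK nth_gens // -size_gens.
apply: Ospan_sum => [l _|l _]; first exact: a0.
rewrite -[X in sigma ^ X](subrK (height (l%:Z - 1))) -scale_expz_sigma.
apply: OspanZ (gen_in_span _).
by apply: vge_trans (vge_expz_sigma _) _; rewrite subr_ge0 height_pred_le.
Qed.

Lemma exists_stable_lattice : exists Lam : M -> Prop,
  [/\ is_O_lattice v Lam, set_eq (img_st T sigma r d Lam) Lam &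
      0 <= r -> set_sub (img_st T sigma 0 (-1) Lam) Lam].
Proof.
exists (Ospan gens); split; first exact: gens_lattice.
  by apply/img_st_PoszE; split; [apply: gens_maps_into | apply: gens_covers].
by move=> r0; apply: img_st_T_sub => y; apply: gens_T_preimage.
Qed.

Lemma stable_lattice_slope (u w : int) (Lam : M -> Prop) : u != 0 ->
  is_O_lattice v Lam -> set_eq (img_st T sigma w u Lam) Lam -> w * d%:Z = u * r.
Proof.
move=> u0 Lat eqLam.
have slope (p : int) (n : nat) : maps_into Lam p n -> covers Lam p n -> p * d%:Z = n%:Z * r.
  move=> Linto Lcov.
  have := stable_lattice_slope_le gens_lattice Lat m0_neq0 gens_covers Linto.
  have := stable_lattice_slope_le Lat gens_lattice m0_neq0 Lcov gens_maps_into.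
  nia.
case: u u0 eqLam => n _ eqLam; first by case/img_st_PoszE: eqLam; apply: slope.
have [Linto Lcov] := img_st_Negz TinvK eqLam.
by have := slope _ _ Linto Lcov; rewrite NegzE; lia.
Qed.
End NewtonEdge.
End CyclicModule.
End Operator.
End Lattice.
End Uniformizer.
End Valuation.

Lemma slope_eq_int (d : nat) (c0 r : int) (s : rat) : (0 < d)%N ->
  s = (0 - c0)%:~R / d%:R -> r%:~R = d%:R * s -> c0 = - r.
Proof.
move=> d0 ->; rewrite mulrC divfK ?pnatr_eq0 -?lt0n // => /eqP.
by rewrite eqr_int; lia.
Qed.

Lemma edge_le_int (d i : nat) (c0 ci r : int) (s : rat) : (0 < d)%N -> c0 = - r ->
  r%:~R = d%:R * s -> c0%:~R + s * i%:R <= ci%:~R -> r * (i%:Z - d%:Z) <= d%:Z * ci.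
Proof.
move=> d0 -> rds edge; rewrite -(ler_int rat) !intrM intrB.
have d0' : (0 : rat) < d%:R by rewrite ltr0n.
move: edge; rewrite intrN; nra.
Qed.

Lemma ratio_eq_slope (d : nat) (r u w : int) (s : rat) : (0 < d)%N -> u != 0 ->
  r%:~R = d%:R * s -> w * d%:Z = u * r -> w%:~R / u%:~R = s.
Proof.
move=> d0 u0 rds wdur; have dn0 : (d%:R : rat) != 0 by rewrite pnatr_eq0 -lt0n.
have -> : s = r%:~R / d%:R by rewrite rds [_ * s]mulrC mulfK.
apply/eqP; rewrite eqr_div ?intr_eq0 //.
by rewrite pmulrn -!intrM wdur mulrC.
Qed.

Theorem theorem3p7
  (L : unitRingType) (v : L -> int) (sigma : L)
  (HL : is_skew_field L) (Hv : is_discrete_valuation v) (Hc : v_complete v)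
  (Hsigma0 : sigma != 0) (Hsigma : v sigma = 1)
  (f : {poly L}) (d : nat) (Hd : (1 <= d)%N)
  (Hmonic : f \is monic) (Hsize : size f = d.+1) (Hc0 : f`_0 != 0)
  (s : rat) (Hs : s = ((0 - v f`_0)%:~R / d%:R))
  (HNP : forall i : nat, (i <= d)%N -> f`_i != 0 ->
           (v f`_0)%:~R + s * i%:R <= (v f`_i)%:~R)
  (r : int) (Hr : r%:~R = d%:R * s)
  (M : lmodType L) (T : M -> M)
  (HT : forall (a : L) (x y : M), T (a *: x + y) = a *: T x + T y)
  (HM : iso_cyclic T f) :
  (exists Lam : M -> Prop,
      is_O_lattice v Lam /\
      set_eq (img_st T sigma r (Posz d) Lam) Lam /\
      (0 < s -> set_sub (img_st T sigma 0 (-1) Lam) Lam)) /\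
  (forall (u w : int) (Lam' : M -> Prop), u != 0 ->
      is_O_lattice v Lam' ->
      set_eq (img_st T sigma w u Lam') Lam' ->
      (w%:~R / u%:~R : rat) = s).
Proof.
have [m0 [Hspan Hker]] := HM.
have Hf0 : v f`_0 = - r := slope_eq_int Hd Hs Hr.
have Hedge i : (i <= d)%N -> f`_i != 0 -> r * (i%:Z - d%:Z) <= d%:Z * v f`_i.
  by move=> id fi0; apply: edge_le_int Hd Hf0 Hr (HNP i id fi0).
have lattice_facts := exists_stable_lattice HL Hv Hsigma0 Hsigma HT Hd Hmonic Hsize Hc0
  Hspan Hker Hf0 Hedge.
have slope_facts := stable_lattice_slope HL Hv Hsigma0 Hsigma HT Hd Hmonic Hsize Hc0
  Hspan Hker Hf0 Hedge.
split=> [|u w Lam u0 Lat stable].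
  have [Lam [Lat stable Tinv_sub]] := lattice_facts.
  exists Lam; do 2!split=> //; move=> s0; apply: Tinv_sub.
  by rewrite -(ler0z rat) Hr mulr_ge0 ?ler0n ?ltW.
exact: ratio_eq_slope Hd u0 Hr (slope_facts _ _ _ u0 Lat stable).
Qed.
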